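(* For every $n\geq1$, the number of $D_{2n}$-orbits of $\mathbf{X}_n$ whose elements have a stabilizer contained in the rotation subgroup $\langle\sigma\rangle=\{1,\sigma,\dots,\sigma^{n-1}\}$ equals $\sum_{d\mid n}\mathrm{orb}_1(d)$.
   Context: For an integer $n\geq1$ let $V_n=\{v_0,\dots,v_{n-1}\}$, indices modulo $n$. The dihedral group $D_{2n}=\{1,\sigma,\dots,\sigma^{n-1},\tau,\sigma\tau,\dots,\sigma^{n-1}\tau\}$ acts on subsets of $V_n$ elementwise, with $\sigma(v_i)=v_{i+1}$, $\tau(v_i)=v_{n-i}$. Let $\mathbf{X}_n$ be the family of subsets $X\subseteq V_n$ such that (a) there is no $i\in\mathbb{Z}_n$ with $v_i,v_{i+1}\in X$, and (b) for every $i\in\mathbb{Z}_n$ at least one of $v_i,v_{i+1},v_{i+2}$ lies in $X$ (for $n\geq3$ these are exactly the maximal independent sets of the cycle graph $C_n$ with edges $v_iv_{i+1}$). $\mathbf{X}_n$ is invariant under $D_{2n}$. For $X\in\mathbf{X}_n$, $\mathrm{Stab}(X)=\{g\in D_{2n}:g(X)=X\}$. For $d\mid 2n$, $\mathrm{orb}_d(n)$ denotes the number of $D_{2n}$-orbits of $\mathbf{X}_n$ of cardinality $2n/d$ (equivalently, whose elements have stabilizer of order $d$). *)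

From mathcomp Require Import all_boot.
Set Implicit Arguments. Unset Strict Implicit. Unset Printing Implicit Defensive.

(* Vertices v_0..v_{n-1} are the elements of 'I_n; index arithmetic mod n. *)
Lemma ord_pos n (i : 'I_n) : 0 < n.
Proof. exact: leq_ltn_trans (leq0n i) (ltn_ord i). Qed.

Definition addI n (i : 'I_n) (k : nat) : 'I_n :=
  Ordinal (ltn_pmod (i + k) (ord_pos i)).

Definition negI n (i : 'I_n) : 'I_n :=
  Ordinal (ltn_pmod (n - i) (ord_pos i)).

(* The dihedral group D_{2n}: the element (k, false) is sigma^k and
   (k, true) is sigma^k tau, for k : 'I_n (2n elements). *)
Definition dih n := ('I_n * bool)%type.

Definition actv n (g : dih n) (v : 'I_n) : 'I_n :=
  if g.2 then addI (negI v) g.1 else addI v g.1.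

Definition act n (g : dih n) (X : {set 'I_n}) : {set 'I_n} :=
  [set actv g v | v in X].

Definition rotsub n : {set dih n} := [set g : dih n | ~~ g.2].

Definition Xn n : {set {set 'I_n}} :=
  [set X : {set 'I_n} | [forall i : 'I_n,
      ~~ ((i \in X) && (addI i 1 \in X)) &&
      [|| i \in X, addI i 1 \in X | addI i 2 \in X]]].

Definition Stab n (X : {set 'I_n}) : {set dih n} :=
  [set g : dih n | act g X == X].

Definition dorbit n (X : {set 'I_n}) : {set {set 'I_n}} :=
  [set act g X | g : dih n].

Definition orbits n : {set {set {set 'I_n}}} := [set dorbit X | X in Xn n].

Definition orb (d n : nat) : nat :=
  #|[set O in orbits n | #|O| == (2 * n) %/ d]|.

(* If Stab X contains only rotations, let p be the least period of X under
   rotation. Then p divides n and X is the preimage, under reduction mod p, of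
   some Y in X_p. A symmetry of Y lifts to a symmetry of X; it must then be a
   rotation by less than p, i.e. the identity, so the orbit of Y is free.
   Conversely, lifting commutes with the action and is injective, so the lift
   of a free orbit of X_d (d | n) is an orbit of X_n with rotational
   stabilizers and 2d elements. Since 2d is the size of the lifted orbit, the
   orbits counted on the left are in bijection with the disjoint union over
   d | n of the free orbits of X_d. *)

From mathcomp Require Import all_boot all_algebra.
From mathcomp Require Import ring zify.
Set Implicit Arguments. Unset Strict Implicit. Unset Printing Implicit Defensive.
Import GRing.Theory Num.Theory.

Lemma modz_dvdm (d m a : int) : (d %| m)%Z -> ((a %% m)%Z = a %[mod d])%Z.
Proof.
move=> dm; apply/eqP; rewrite eqz_mod_dvd; apply: dvdz_trans dm _.
by rewrite -eqz_mod_dvd modz_mod.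
Qed.

Section Action.
Local Open Scope ring_scope.
Variable n : nat.
Implicit Types (g : dih n) (v w : 'I_n) (X : {set 'I_n}).

Lemma actvE g v : (actv g v)%:Z = (((-1) ^+ g.2 * v%:Z + g.1%:Z) %% n)%Z.
Proof.
rewrite /actv /addI /negI; case: g => k [] /=; rewrite -modz_nat PoszD.
  rewrite -modz_nat modzDml -subzn ?(ltnW (ltn_ord v)) // expr1 mulN1r.
  by rewrite -addrA modzDl.
by rewrite expr0 mul1r.
Qed.

Lemma ord_eq_mod v w : (v%:Z = w %[mod n])%Z -> v = w.
Proof.
have ord_int (u : 'I_n) : 0 <= u%:Z < n by have := ltn_ord u; lia.
by rewrite !modz_small ?ord_int // => /eqP; rewrite eqz_nat => /eqP/val_inj.
Qed.

Lemma actv_inj g : injective (actv g).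
Proof.
move=> v w /(congr1 (fun u : 'I_n => u : int)); rewrite !actvE => /eqP.
rewrite eqz_modDr eqz_mod_dvd -mulrBr rpredMsign -eqz_mod_dvd => /eqP.
exact: ord_eq_mod.
Qed.

Lemma mem_act g X v : (actv g v \in act g X) = (v \in X).
Proof. exact/mem_imset/actv_inj. Qed.

Lemma act_rot0 (k : 'I_n) X : k = 0 :> nat -> act (k, false) X = X.
Proof.
move=> k0; rewrite -[RHS]imset_id; apply: eq_imset => v.
by apply: val_inj; rewrite /actv /= k0 addn0 modn_small.
Qed.

Lemma actv_mod g v : (actv g v = (-1) ^+ g.2 * v%:Z + g.1%:Z %[mod n])%Z.
Proof. by rewrite actvE modz_mod. Qed.

Lemma ord_mod_exists (n_gt0 : (0 < n)%N) a : exists v : 'I_n, (v%:Z = a %[mod n])%Z.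
Proof.
have a_ge0 : 0 <= (a %% n)%Z by rewrite modz_ge0 //; lia.
have a_lt : (`|(a %% n)%Z| < n)%N by have := @ltz_pmod a n; lia.
by exists (Ordinal a_lt); rewrite /= gez0_abs // modz_mod.
Qed.

Lemma actv_factor g g' : exists c : dih n,
  [/\ c.2 = g.2 (+) g'.2, (c.1%:Z = (-1) ^+ g.2 * (g'.1%:Z - g.1%:Z) %[mod n])%Z
    & actv g \o actv c =1 actv g'].
Proof.
have [k c1E] := ord_mod_exists (ord_pos g.1) ((-1) ^+ g.2 * (g'.1%:Z - g.1%:Z)).
pose c : dih n := (k, g.2 (+) g'.2).
exists c; split=> // v /=; apply: ord_eq_mod; apply/eqP; rewrite eqz_mod_dvd.
have dvd_mod x y : (x = y %[mod n])%Z -> (n %| x - y)%Z by move/eqP; rewrite eqz_mod_dvd.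
have e1 := dvd_mod _ _ (actv_mod g (actv c v)).
have e2 := dvd_mod _ _ (actv_mod c v).
have e3 := dvd_mod _ _ c1E.
have e4 := dvd_mod _ _ (actv_mod g' v).
set A := Posz (actv g (actv c v)); set Acv := Posz (actv c v).
set B := Posz (actv g' v); set c1 := Posz k.
suff -> : A - B = (A - ((-1) ^+ g.2 * Acv + g.1%:Z))
    + (-1) ^+ g.2 * (Acv - ((-1) ^+ c.2 * v%:Z + c1))
    + (-1) ^+ g.2 * (c1 - (-1) ^+ g.2 * (g'.1%:Z - g.1%:Z))
    - (B - ((-1) ^+ g'.2 * v%:Z + g'.1%:Z)).
  by apply: rpredB e4; apply: rpredD; [apply: rpredD e1 _|]; rewrite rpredMsign.
rewrite /c /= signr_addb; case: (g.2); case: (g'.2); rewrite /= ?expr0 ?expr1; ring.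
Qed.

Definition dih1 : {set dih n} := [set g : dih n | ~~ g.2 && (g.1 == 0 :> nat)].

(* c is g^-1 g' *)
Lemma act_eq_stab g g' X : act g X = act g' X -> exists2 c, c \in Stab X &
  (c \in dih1 -> g = g').
Proof.
have [c [c2 c1 gcg']] := actv_factor g g'.
move=> eq_act; exists c.
  rewrite inE; apply/eqP/(imset_inj (@actv_inj g)).
  by rewrite -[actv g @: X]/(act g X) eq_act -imset_comp; apply: eq_imset.
rewrite inE c2 negb_add => /andP [/eqP g2E /eqP c10].
move: c1; rewrite c10 => /esym/eqP.
rewrite eqz_mod_dvd subr0 rpredMsign -eqz_mod_dvd => /eqP/ord_eq_mod g1E.
by rewrite [g]surjective_pairing [g']surjective_pairing g1E g2E.
Qed.

Lemma card_dorbit_free X : (#|dorbit X| == 2 * n)%N = (Stab X \subset dih1).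
Proof.
have card_dih : #|{: dih n}| = (2 * n)%N by rewrite card_prod card_ord card_bool mulnC.
rewrite -card_dih; apply/imset_injP/subsetP => [inj_act g | stab1 g g' _ _ eq_act].
  rewrite inE => /eqP stab_g.
  have e_stab : act (Ordinal (ord_pos g.1), false) X = X by apply: act_rot0.
  by have := inj_act _ _ isT isT (etrans stab_g (esym e_stab)) => ->; rewrite inE.
by have [c /stab1 c1 c1_eq] := act_eq_stab eq_act; apply: c1_eq.
Qed.
End Action.

Section Period.
Variables (n : nat) (X : {set 'I_n}).

Definition is_period k := [forall i, (addI i k \in X) == (i \in X)].

Lemma is_periodP k : reflect (forall i, (addI i k \in X) = (i \in X)) (is_period k).
Proof. exact: 'forall_eqP. Qed.

Lemma addI_addn (i : 'I_n) a b : addI (addI i a) b = addI i (a + b).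
Proof. by apply: val_inj; rewrite /= modnDml addnA. Qed.

Lemma is_period_n : is_period n.
Proof.
by apply/is_periodP => i; congr (_ \in X); apply: val_inj; rewrite /= modnDr modn_small.
Qed.

Lemma is_periodM m k : is_period k -> is_period (m * k).
Proof.
move/is_periodP=> per_k; elim: m => [|m /is_periodP IHm]; apply/is_periodP => i.
  by congr (_ \in X); apply: val_inj; rewrite /= addn0 modn_small.
by rewrite mulSn -addI_addn IHm per_k.
Qed.

Lemma is_period_addr a b : is_period a -> is_period (a + b) = is_period b.
Proof.
move=> /is_periodP per_a; apply/is_periodP/is_periodP => per_b i.
  by rewrite -per_a addI_addn addnC per_b.
by rewrite -addI_addn per_b per_a.
Qed.

Lemma least_period : 0 < n -> exists p,
  [/\ 0 < p, p %| n, is_period p & forall k, 0 < k -> is_period k -> p <= k].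
Proof.
move=> n_gt0; have : exists k, (0 < k) && is_period k by exists n; rewrite n_gt0 is_period_n.
case/ex_minnP=> p /andP [p_gt0 per_p] p_min.
exists p; split=> // [|k k_gt0 per_k]; last by apply: p_min; rewrite k_gt0.
have per_r : is_period (n %% p).
  by rewrite -(is_period_addr _ (is_periodM (n %/ p) per_p)) -divn_eq is_period_n.
rewrite /dvdn eqn0Ngt; apply/negP => r_gt0.
by have := ltn_pmod n p_gt0; rewrite ltnNge p_min ?r_gt0.
Qed.
End Period.

Lemma rot_period n (k : 'I_n) X : act (k, false) X = X -> is_period X k.
Proof. by move=> fixX; apply/is_periodP => i; rewrite -{1}fixX (mem_act (k, false)). Qed.

Definition lift n d (Y : {set 'I_d}) : {set 'I_n} :=
  [set i : 'I_n | [exists j in Y, val j == i %% d]].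
Arguments lift : clear implicits.

Section Lift.
Variables (n d : nat) (n_gt0 : 0 < n) (d_dvd_n : d %| n).

Fact lift_d_gt0 : 0 < d. Proof. exact: dvdn_gt0 d_dvd_n. Qed.
Fact lift_leq_dn : d <= n. Proof. exact: dvdn_leq d_dvd_n. Qed.

Definition red (i : 'I_n) : 'I_d := Ordinal (ltn_pmod i lift_d_gt0).
Definition red_dih (g : dih n) : dih d := (red g.1, g.2).
Local Notation widen := (widen_ord lift_leq_dn).

Lemma red_widen j : red (widen j) = j.
Proof. by apply: val_inj; rewrite /= modn_small. Qed.

Lemma mem_lift Y i : (i \in lift n d Y) = (red i \in Y).
Proof.
rewrite inE; apply/existsP/idP => [[j /andP [Yj /eqP ji]]|Y_ri]; last first.
  by exists (red i); rewrite Y_ri eqxx.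
by rewrite (_ : red i = j) //; apply: val_inj.
Qed.

Lemma lift_inj : injective (lift n d).
Proof. by move=> Y Y' eqY; apply/setP => j; rewrite -(red_widen j) -!mem_lift eqY. Qed.

Lemma red_addI i k : red (addI i k) = addI (red i) k.
Proof. by apply: val_inj; rewrite /= modn_dvdm // modnDml. Qed.

Lemma lift_Xn Y : (lift n d Y \in Xn n) = (Y \in Xn d).
Proof.
rewrite !inE; apply/forallP/forallP => [all_n j | all_d i].
  by have := all_n (widen j); rewrite !mem_lift !red_addI red_widen.
by rewrite !mem_lift !red_addI; apply: all_d.
Qed.

Lemma red_actv g v : red (actv g v) = actv (red_dih g) (red v).
Proof.
apply: (@ord_eq_mod d); rewrite !actvE /= -!modz_nat actvE modz_mod.
by rewrite modzDmr -[in RHS]modzDml modzMmr modzDml modz_mod modz_dvdm ?dvdz_nat.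
Qed.

Lemma act_lift g Y : act g (lift n d Y) = lift n d (act (red_dih g) Y).
Proof.
apply/setP => x; have inj_g := @actv_inj n g.
by rewrite -(f_invF inj_g x) mem_act !mem_lift red_actv mem_act.
Qed.

Lemma dorbit_lift Y : dorbit (lift n d Y) = lift n d @: dorbit Y.
Proof.
apply/setP => O; apply/imsetP/imsetP => [[g _ ->]|[W /imsetP [h _ ->] ->]].
  by exists (act (red_dih g) Y); [apply: imset_f | apply: act_lift].
exists (widen h.1, h.2) => //; rewrite act_lift /red_dih /= red_widen.
by rewrite -surjective_pairing.
Qed.

Lemma lift_stab_rot Y : Stab Y \subset dih1 d -> Stab (lift n d Y) \subset rotsub n.
Proof.
move=> /subsetP stab1; apply/subsetP => g; rewrite !inE act_lift.
move=> /eqP/lift_inj stab_g; have := stab1 (red_dih g).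
by rewrite !inE stab_g eqxx => /(_ isT)/andP [].
Qed.

Lemma lift_restrict X : is_period X d -> X = lift n d [set j | widen j \in X].
Proof.
move=> per_d; apply/setP => i; rewrite mem_lift inE.
rewrite {1}(_ : i = addI (widen (red i)) (i %/ d * d)); last first.
  by apply: val_inj; rewrite /= addnC -divn_eq modn_small.
by move/is_periodP: (is_periodM (i %/ d) per_d) => ->.
Qed.

Lemma lift_stab_trivial X Y : X = lift n d Y -> Stab X \subset rotsub n ->
  (forall k, 0 < k -> is_period X k -> d <= k) -> Stab Y \subset dih1 d.
Proof.
move=> XE /subsetP stab_rot d_min; apply/subsetP => h; rewrite !inE => /eqP stab_h.
have stab_g : (widen h.1, h.2) \in Stab X.
  by rewrite inE XE act_lift /red_dih /= red_widen -surjective_pairing stab_h.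
have := stab_rot _ stab_g; rewrite inE /= => h2F; rewrite h2F /=.
move: stab_g; rewrite inE (negbTE h2F) => /eqP/rot_period per_h1.
rewrite eqn0Ngt; apply/negP => h1_gt0.
by have := ltn_ord h.1; rewrite ltnNge d_min.
Qed.
End Lift.

Lemma card_partition_label (T : finType) (I : eqType) (A : {set T}) (f : T -> I)
    (s : seq I) :
  uniq s -> {in A, forall x, f x \in s} ->
  #|A| = \sum_(i <- s) #|[set x in A | f x == i]|.
Proof.
move=> s_uniq f_s; rewrite -sum1_card.
under [RHS]eq_bigr do rewrite -sum1_card.
rewrite (exchange_big_dep (mem A)) /=; last by move=> i x _; rewrite inE => /andP [].
apply: eq_bigr => x Ax; rewrite sum1_count.
rewrite (@eq_count _ _ (pred1 (f x))) ?count_uniq_mem ?f_s // => i.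
by rewrite inE Ax eq_sym.
Qed.

Definition rot_orbits n := [set dorbit X | X in [set X in Xn n | Stab X \subset rotsub n]].
Definition free_orbits d := [set O in orbits d | #|O| == 2 * d].

Lemma rot_orbit_lift n O : 0 < n -> O \in rot_orbits n -> exists d, d %| n /\
  exists2 Y : {set 'I_d}, (Y \in Xn d) && (Stab Y \subset dih1 d) & O = lift n d @: dorbit Y.
Proof.
move=> n_gt0 /imsetP [X]; rewrite inE => /andP [X_Xn X_rot] ->.
have [p [_ p_dvd per_p p_min]] := least_period X n_gt0.
move: (lift_restrict n_gt0 p_dvd per_p); set Y := [set j | _ \in X] => XE.
exists p; split=> //; exists Y; last by rewrite XE dorbit_lift.
by rewrite -(lift_Xn n_gt0 p_dvd) -XE X_Xn (lift_stab_trivial n_gt0 p_dvd XE).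
Qed.

Lemma lift_free_orbit n d (Y : {set 'I_d}) : 0 < n -> d %| n ->
  Y \in Xn d -> Stab Y \subset dih1 d ->
  lift n d @: dorbit Y \in rot_orbits n /\ #|lift n d @: dorbit Y| = 2 * d.
Proof.
move=> n_gt0 d_dvd Y_Xn Y_free; rewrite -dorbit_lift //; split.
  by apply: imset_f; rewrite inE lift_Xn // Y_Xn lift_stab_rot.
rewrite dorbit_lift // card_imset; last exact: lift_inj.
by apply/eqP; rewrite card_dorbit_free.
Qed.

Lemma rot_orbits_of_size n d : 0 < n -> d %| n ->
  [set O in rot_orbits n | #|O|./2 == d]
  = [set lift n d @: O | O : {set {set 'I_d}} in free_orbits d].
Proof.
move=> n_gt0 d_dvd; apply/setP => O; apply/idP/imsetP.
  case/setIdP=> /(rot_orbit_lift n_gt0) [p [p_dvd [Y /andP [Y_Xn Y_free] ->]]].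
  have [_ ->] := lift_free_orbit n_gt0 p_dvd Y_Xn Y_free.
  rewrite mul2n doubleK => /eqP pd; subst p.
  by exists (dorbit Y); rewrite // inE imset_f //= card_dorbit_free.
case=> _ /setIdP [/imsetP [Y Y_Xn ->]]; rewrite card_dorbit_free => Y_free ->.
have [rot_O card_O] := lift_free_orbit n_gt0 d_dvd Y_Xn Y_free.
by rewrite inE rot_O card_O mul2n doubleK eqxx.
Qed.

Theorem proposition2p3 (n : nat) (hn : 1 <= n) :
  #|[set dorbit X | X in [set X in Xn n | Stab X \subset rotsub n]]|
  = \sum_(d <- divisors n) orb 1 d.
Proof.
pose half_size (O : {set {set 'I_n}}) := #|O|./2.
rewrite -/(rot_orbits n) (card_partition_label (f := half_size) (divisors_uniq n)).
  apply: eq_big_seq => d; rewrite -dvdn_divisors // => d_dvd.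
  rewrite rot_orbits_of_size // card_imset; last exact/imset_inj/(lift_inj hn d_dvd).
  by rewrite /orb divn1.
move=> O /(rot_orbit_lift hn) [p [p_dvd [Y /andP [Y_Xn Y_free] ->]]].
have [_ card_O] := lift_free_orbit hn p_dvd Y_Xn Y_free.
by rewrite /half_size card_O mul2n doubleK -dvdn_divisors.
Qed.
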